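(* Under Assumption 1, let $(x^k)_{k\in\mathbb{N}}$ be generated by PPGA. Then $x^k\in\mathrm{dom}(F)$ for all $k$, and: (i) $F(x^{k+1})+\frac{1/\alpha_k-L}{2g(x^{k+1})}\|x^{k+1}-x^k\|_2^2\le F(x^k)$ for all $k\in\mathbb{N}$; (ii) $\lim_{k\to\infty}C_k=\lim_{k\to\infty}F(x^k)=C$ for some $C\ge0$; (iii) $\lim_{k\to\infty}\frac{1/\alpha_k-L}{g(x^{k+1})}\|x^{k+1}-x^k\|_2^2=0$.
   Context: Let $f:\mathbb{R}^n\to(-\infty,+\infty]$ be proper lsc, $g,h:\mathbb{R}^n\to\mathbb{R}$, $\Omega:=\{x:g(x)\ne0\}$, $F(x):=\frac{f(x)+h(x)}{g(x)}$ on $\Omega\cap\mathrm{dom}(f)$ and $+\infty$ otherwise. Assumption 1: (i) $f$ locally Lipschitz on $\mathrm{dom}(f)\cap\Omega$; (ii) $g$ locally Lipschitz continuously differentiable and positive on $\Omega\cap\mathrm{dom}(f)$; (iii) $\nabla h$ is $L$-Lipschitz, $L>0$; (iv) $f+h\ge0$ on $\mathrm{dom}(f)$, $\Omega\cap\mathrm{dom}(f)\ne\emptyset$; (v) $\mathrm{prox}_{f-\gamma g}(x)\ne\emptyset$ for all $x$, $\gamma\ge0$; (vi) $F$ lsc and level bounded. $\mathrm{prox}_\varphi(x):=\arg\min_u\{\varphi(u)+\frac12\|u-x\|_2^2\}$. PPGA (parameterized proximal-gradient algorithm): choose $x^0\in\Omega\cap\mathrm{dom}(f)$ and step sizes $\alpha_k$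 with $0<\underline\alpha\le\alpha_k\le\overline\alpha<1/L$; for $k=0,1,\dots$ set $C_k:=F(x^k)$ and pick any $x^{k+1}\in\mathrm{prox}_{\alpha_k(f-C_kg)}(x^k-\alpha_k\nabla h(x^k))$. *)

From HB Require Import structures.
From mathcomp Require Import all_boot all_order all_algebra.
From mathcomp Require Import all_classical all_reals all_analysis.
Set Implicit Arguments. Unset Strict Implicit. Unset Printing Implicit Defensive.
Import Order.TTheory GRing.Theory Num.Theory.
Import numFieldNormedType.Exports.
Local Open Scope classical_set_scope.
Local Open Scope ring_scope.

Section Defs.
Context {R : realType} {n : nat}.
Implicit Types (x y z u v : 'rV[R]_n).

Definition dotv x y : R := \sum_(i < n) x ord0 i * y ord0 i.
Definition norm2 x : R := Num.sqrt (dotv x x).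

Definition grad (h : 'rV[R]_n -> R) x : 'rV[R]_n :=
  \row_(i < n) ('d h x) (delta_mx ord0 i).

Definition edom (f : 'rV[R]_n -> \bar R) : set 'rV[R]_n :=
  [set x | (f x < +oo)%E].

Definition proper_fun (f : 'rV[R]_n -> \bar R) : Prop :=
  (forall x, f x != -oo%E) /\ (exists x, (f x < +oo)%E).

Definition lsc (f : 'rV[R]_n -> \bar R) : Prop :=
  forall x (a : R), (a%:E < f x)%E ->
    exists2 d : R, 0 < d & forall y, norm2 (y - x) < d -> (a%:E < f y)%E.

Definition level_bounded (F : 'rV[R]_n -> \bar R) : Prop :=
  forall a : R, exists M : R, forall x, (F x <= a%:E)%E -> norm2 x <= M.

Definition locally_lipschitz_on (f : 'rV[R]_n -> \bar R) (S : set 'rV[R]_n) :=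
  forall x, S x -> exists2 r : R, 0 < r & exists K : R,
    forall y z, S y -> S z -> norm2 (y - x) < r -> norm2 (z - x) < r ->
      `|fine (f y) - fine (f z)| <= K * norm2 (y - z).

Definition locally_lipschitz_diff_on (g : 'rV[R]_n -> R) (S : set 'rV[R]_n) :=
  forall x, S x -> exists2 r : R, 0 < r & exists K : R,
    (forall y, norm2 (y - x) < r -> differentiable g y) /\
    (forall y z, norm2 (y - x) < r -> norm2 (z - x) < r ->
      norm2 (grad g y - grad g z) <= K * norm2 (y - z)).

Definition prox (phi : 'rV[R]_n -> \bar R) x : set 'rV[R]_n :=
  [set u | forall v, (phi u + (2^-1 * norm2 (u - x) ^+ 2)%:E
                      <= phi v + (2^-1 * norm2 (v - x) ^+ 2)%:E)%E].

Definition Fobj (f : 'rV[R]_n -> \bar R) (g h : 'rV[R]_n -> R) x : \bar R :=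
  if (g x != 0) && (f x < +oo)%E then ((fine (f x) + h x) / g x)%:E else +oo%E.

End Defs.

(* With C = F(y), comparing the prox objective at the new point u and at y, and
   bounding h by the descent lemma for its L-Lipschitz gradient, gives
   f u + h u + (1/alpha - L)/2 |u - y|^2 <= C g u.  If g u = 0 this forces
   u = y (as f + h >= 0), contradicting g y <> 0; so u stays in dom F, and
   dividing by g u > 0 yields (i).  The values F(x^k) are then nonincreasing
   and nonnegative, hence convergent, and the decrease terms of (i) telescope,
   so they tend to zero. *)
From HB Require Import structures.
From mathcomp Require Import all_boot all_order all_algebra.
From mathcomp Require Import all_classical all_reals all_analysis.
From mathcomp Require Import ring lra.
Import Order.TTheory GRing.Theory Num.Theory.
Import numFieldNormedType.Exports.
Local Open Scope classical_set_scope.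
Local Open Scope ring_scope.

Section InnerProduct.
Context {R : realType} {n : nat}.
Implicit Types (x y z : 'rV[R]_n).

Lemma dotvC x y : dotv x y = dotv y x.
Proof. by apply: eq_bigr => i _; rewrite mulrC. Qed.

Lemma dotvDl x y z : dotv (x + y) z = dotv x z + dotv y z.
Proof. by rewrite /dotv -big_split; apply: eq_bigr => i _; rewrite mxE mulrDl. Qed.

Lemma dotvZl (a : R) x y : dotv (a *: x) y = a * dotv x y.
Proof. by rewrite /dotv mulr_sumr; apply: eq_bigr => i _; rewrite mxE mulrA. Qed.

Lemma dotvBl x y z : dotv (x - y) z = dotv x z - dotv y z.
Proof. by rewrite dotvDl -scaleN1r dotvZl mulN1r. Qed.

Lemma dotvDr x y z : dotv z (x + y) = dotv z x + dotv z y.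
Proof. by rewrite dotvC dotvDl !(dotvC z). Qed.

Lemma dotvZr (a : R) x y : dotv y (a *: x) = a * dotv y x.
Proof. by rewrite dotvC dotvZl dotvC. Qed.

Lemma dotvBr x y z : dotv z (x - y) = dotv z x - dotv z y.
Proof. by rewrite dotvC dotvBl !(dotvC z). Qed.

Lemma dotvv_ge0 x : 0 <= dotv x x.
Proof. by apply: sumr_ge0 => i _; rewrite -expr2 sqr_ge0. Qed.

Lemma dotvv_eq0 x : dotv x x = 0 -> x = 0.
Proof.
move=> /eqP; rewrite psumr_eq0 => [/allP x0|i _]; last by rewrite -expr2 sqr_ge0.
apply/rowP => i; rewrite mxE.
by have := x0 i (mem_index_enum _); rewrite /= -expr2 sqrf_eq0 => /eqP.
Qed.

Lemma norm2_ge0 x : 0 <= norm2 x.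
Proof. exact: sqrtr_ge0. Qed.

Lemma norm2_sqr x : norm2 x ^+ 2 = dotv x x.
Proof. by rewrite /norm2 sqr_sqrtr // dotvv_ge0. Qed.

Lemma norm2_eq0 x : norm2 x = 0 -> x = 0.
Proof. by move=> x0; apply: dotvv_eq0; rewrite -norm2_sqr x0 expr0n. Qed.

Lemma norm2Z (a : R) x : norm2 (a *: x) = `|a| * norm2 x.
Proof. by rewrite /norm2 dotvZl dotvZr mulrA -expr2 sqrtrM ?sqr_ge0 // sqrtr_sqr. Qed.

Lemma norm2_gt0 x : x != 0 -> 0 < norm2 x.
Proof. by move=> x0; rewrite lt_def norm2_ge0 andbT; apply: contra x0 => /eqP/norm2_eq0->. Qed.

Lemma dotv_le_norm2 x y : dotv x y <= norm2 x * norm2 y.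
Proof.
have [->|/norm2_gt0 x0] := eqVneq x 0.
  by rewrite -(scale0r 0) dotvZl mul0r mulr_ge0 // norm2_ge0.
have [->|/norm2_gt0 y0] := eqVneq y 0.
  by rewrite -(scale0r 0) dotvZr mul0r mulr_ge0 // norm2_ge0.
have := dotvv_ge0 (norm2 y *: x - norm2 x *: y).
rewrite !dotvBl !dotvBr !dotvZl !dotvZr -!norm2_sqr (dotvC y x).
set A := norm2 x; set B := norm2 y; set d := dotv x y => ge0.
have : 0 <= (A * B) * (A * B - d) by nra.
by rewrite pmulr_rge0 ?mulr_gt0 // subr_ge0.
Qed.

Lemma norm2DZ_sqr x z (c : R) :
  norm2 (x + c *: z) ^+ 2 = dotv x x + 2 * c * dotv z x + c ^+ 2 * dotv z z.
Proof. by rewrite norm2_sqr !dotvDl !dotvDr !dotvZl !dotvZr (dotvC x z); ring. Qed.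

End InnerProduct.

Section DescentLemma.
Context {R : realType} {n : nat}.
Context {h : 'rV[R]_n -> R} {L : R}.
Hypothesis h_diff : forall z, differentiable h z.
Hypothesis grad_h_lip : forall y z, norm2 (grad h y - grad h z) <= L * norm2 (y - z).

Lemma diff_dotv_grad z v : 'd h z v = dotv (grad h z) v.
Proof.
rewrite [in LHS](row_sum_delta v) linear_sum; apply: eq_bigr => i _.
by rewrite linearZ /= mxE mulrC.
Qed.

Lemma is_derive_along_line y d (t : R) :
  is_derive t 1 (fun s => h (y + s *: d)) (dotv (grad h (y + t *: d)) d).
Proof.
have [line_diff line_d] :=
  @is_diffD _ _ _ _ _ _ _ t (is_diff_cst y t) (is_diff_scalel t d).
have comp_diff : differentiable (h \o (cst y + ( *:%R ^~ d))) t.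
  exact: differentiable_comp.
apply: DeriveDef; first exact: diff_derivable.
by rewrite deriveE // diff_comp // line_d /= add0r scale1r diff_dotv_grad.
Qed.

Lemma dotv_grad_line_le y d (c : R) : 0 <= c ->
  dotv (grad h (y + c *: d) - grad h y) d <= L * c * norm2 d ^+ 2.
Proof.
move=> c0; apply: le_trans (dotv_le_norm2 _ _) _.
rewrite expr2 mulrA ler_wpM2r ?norm2_ge0 //.
have := grad_h_lip (y + c *: d) y.
rewrite (_ : y + c *: d - y = c *: d); last by rewrite addrAC subrr add0r.
by rewrite norm2Z ger0_norm // mulrA.
Qed.

Lemma descent_lemma y u :
  h u <= h y + dotv (grad h y) (u - y) + L / 2 * norm2 (u - y) ^+ 2.
Proof.
set d := u - y; set a := dotv (grad h y) d; set b := L / 2 * norm2 d ^+ 2.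
(* mean value theorem for the gap between h on [y, u] and its quadratic model *)
pose psi : R -> R :=
  (fun s => h (y + s *: d)) - (a \*: (@id R)) - (b \*: ((@id R) * (@id R))).
pose dpsi t := dotv (grad h (y + t *: d)) d - a - b * (t + t).
have psi_derive t : is_derive t (1:R) psi (dpsi t).
  have := is_deriveB (is_deriveB (is_derive_along_line y d t)
    (is_deriveZ a (is_derive_id t (1:R))))
    (is_deriveZ b (is_deriveM (is_derive_id t (1:R)) (is_derive_id t (1:R)))).
  by move/is_derive_eq; apply; rewrite /dpsi /GRing.scale /= !mulr1.
have psi_cont : {within `[0, 1], continuous psi}.
  apply: continuous_subspaceT => t; apply: differentiable_continuous.
  by apply/derivable1_diffP; exact: (@ex_derive _ _ _ _ _ _ _ (psi_derive t)).
have [c c01 psi_mvt] := MVT ltr01 (fun t _ => psi_derive t) psi_cont.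
have psi1 : psi 1 = h u - a - b.
  change (h (y + 1 *: d) - a * 1 - b * (1 * 1) = h u - a - b).
  by rewrite scale1r [y + d]addrC subrK !mulr1.
have psi0 : psi 0 = h y.
  change (h (y + 0 *: d) - a * 0 - b * (0 * 0) = h y).
  by rewrite scale0r addr0 !mulr0 !subr0.
have dpsi_le0 : dpsi c <= 0.
  have c0 : 0 <= c by move: c01; rewrite in_itv /= => /andP[/ltW].
  have := dotv_grad_line_le y d c c0.
  by rewrite /dpsi /b -dotvBl; lra.
move: psi_mvt; rewrite psi1 psi0 subr0 mulr1 => psi_mvt.
by have := dpsi_le0; rewrite -psi_mvt; lra.
Qed.

End DescentLemma.

Lemma cvg_sufficient_decrease {R : realType} (s t : nat -> R) :
  (forall k, 0 <= s k) -> (forall k, 0 <= t k) ->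
  (forall k, s k.+1 + t k <= s k) ->
  exists2 l : R, 0 <= l & s @ \oo --> l /\ t @ \oo --> 0.
Proof.
move=> s_ge0 t_ge0 s_decr.
have s_noninc : nonincreasing_seq s.
  by apply/nonincreasing_seqP => k; have := s_decr k; have := t_ge0 k; lra.
have s_lb : has_lbound (range s) by exists 0 => _ [k _ <-].
have s_cvg := nonincreasing_cvgn s_noninc s_lb.
exists (inf (range s)); first by apply: lb_le_inf => [|_ [k _ <-]]; first exists (s 0%N), 0%N.
split => //.
have s_diff_cvg : (fun k => s k - s k.+1) @ \oo --> 0.
  by rewrite -(subrr (inf (range s))); apply: cvgB => //; rewrite cvg_shiftS.
apply: (squeeze_cvgr _ (cvg_cst 0) s_diff_cvg).
by apply: filterE => k; rewrite t_ge0 /=; have := s_decr k; lra.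
Qed.

Section PPGA.
Context {R : realType} {n : nat}.
Context {f : 'rV[R]_n -> \bar R} {g h : 'rV[R]_n -> R} {L : R}.
Hypothesis f_neq_ninfty : forall z, f z != -oo%E.
Hypothesis h_diff : forall z, differentiable h z.
Hypothesis grad_h_lip : forall y z, norm2 (grad h y - grad h z) <= L * norm2 (y - z).

Lemma f_fineK {y : 'rV[R]_n} : (f y < +oo)%E -> f y = (fine (f y))%:E.
Proof. by move=> fy_fin; rewrite fineK // fin_numE f_neq_ninfty -ltey. Qed.

Lemma FobjE {y : 'rV[R]_n} : g y != 0 -> (f y < +oo)%E ->
  Fobj f g h y = (fine (Fobj f g h y))%:E.
Proof. by move=> gy0 fy_fin; rewrite /Fobj gy0 fy_fin. Qed.

Lemma prox_step_decrease {a C fy : R} {y u : 'rV[R]_n} : 0 < a ->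
  f y = fy%:E -> fy + h y = C * g y ->
  prox (fun v => (a%:E * (f v - (C * g v)%:E))%E) (y - a *: grad h y) u ->
  exists2 fu : R, f u = fu%:E &
    fu + h u + (a^-1 - L) / 2 * norm2 (u - y) ^+ 2 <= C * g u.
Proof.
move=> a0 fyE Cgy /(_ y).
set G := grad h y; set D := u - y.
have -> : u - (y - a *: G) = D + a *: G by rewrite opprB addrA addrAC.
have -> : y - (y - a *: G) = a *: G by rewrite opprB addrA addrAC subrr add0r.
rewrite fyE /=.
case fuE: (f u) => [fu||]; last by have := f_neq_ninfty u; rewrite fuE.
- rewrite lee_fin norm2DZ_sqr norm2_sqr dotvZl dotvZr => prox_le.
  exists fu => //.
  have := descent_lemma h_diff grad_h_lip y u.
  rewrite -/G -/D norm2_sqr; set N := dotv D D in prox_le * => desc.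
  have a_desc := ler_wpM2l (ltW a0) desc.
  rewrite -subr_le0 -(pmulr_rle0 _ a0).
  have -> : a * (fu + h u + (a^-1 - L) / 2 * N - C * g u) =
            a * (fu - C * g u) + a * h u + (1 - a * L) / 2 * N.
    by field; rewrite gt_eqF.
  have : a * (fy - C * g y) = - (a * h y) by rewrite -Cgy; ring.
  lra.
- by rewrite mulry gtr0_sg // mul1e leye_eq.
Qed.

Hypothesis g_gt0 : forall {z}, g z != 0 -> (f z < +oo)%E -> 0 < g z.
Hypothesis fh_ge0 : forall z, (f z < +oo)%E -> (0 <= f z + (h z)%:E)%E.

Lemma ppga_step {a : R} {y u : 'rV[R]_n} : 0 < a -> L < a^-1 ->
  g y != 0 -> (f y < +oo)%E ->
  prox (fun v => (a%:E * (f v - (fine (Fobj f g h y) * g v)%:E))%E)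
    (y - a *: grad h y) u ->
  [/\ g u != 0, (f u < +oo)%E &
    (Fobj f g h u + ((a^-1 - L) / (2 * g u) * norm2 (u - y) ^+ 2)%:E
       <= Fobj f g h y)%E].
Proof.
move=> a0 La gy0 fy_fin.
have FyE := FobjE gy0 fy_fin.
have Cgy : fine (f y) + h y = fine (Fobj f g h y) * g y.
  by rewrite /Fobj gy0 fy_fin /= divfK.
move=> /(prox_step_decrease a0 (f_fineK fy_fin) Cgy) [fu fuE].
set C := fine (Fobj f g h y); set N := norm2 (u - y) ^+ 2 => decrease.
have fu_fin : (f u < +oo)%E by rewrite fuE ltry.
have fhu_ge0 : 0 <= fu + h u by have := fh_ge0 _ fu_fin; rewrite fuE lee_fin.
have E_ge0 : 0 <= (a^-1 - L) / 2 * N.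
  by rewrite /N mulr_ge0 ?sqr_ge0 // divr_ge0 // subr_ge0 ltW.
have gu0 : g u != 0.
  apply/eqP => gu0; move: decrease; rewrite gu0 mulr0 => decrease.
  have /eqP : (a^-1 - L) / 2 * N = 0 by lra.
  rewrite /N !mulf_eq0 invr_eq0 pnatr_eq0 subr_eq0 (gt_eqF La) /= orbb.
  move=> /eqP /(@norm2_eq0 R n) /eqP; rewrite subr_eq0 => /eqP uy.
  by move: gy0; rewrite -uy gu0 eqxx.
have gu_gt0 := g_gt0 gu0 fu_fin.
split => //.
rewrite FyE /Fobj gu0 fuE ltry /= lee_fin.
rewrite (_ : _ + _ = (fu + h u + (a^-1 - L) / 2 * N) / g u); last first.
  by field; rewrite gu0 gt_eqF.
by rewrite ler_pdivrMr.
Qed.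

Lemma Fobj_ge0 {y : 'rV[R]_n} : g y != 0 -> (f y < +oo)%E -> 0 <= fine (Fobj f g h y).
Proof.
move=> gy0 fy_fin; rewrite /Fobj gy0 fy_fin /= divr_ge0 ?(ltW (g_gt0 gy0 fy_fin)) //.
by have := fh_ge0 _ fy_fin; rewrite (f_fineK fy_fin) lee_fin.
Qed.

Context {alpha : nat -> R} {x : nat -> 'rV[R]_n}.
Hypothesis alpha_gt0 : forall k, 0 < alpha k.
Hypothesis L_lt_alphaV : forall k, L < (alpha k)^-1.
Hypothesis x0_dom : g (x 0%N) != 0 /\ (f (x 0%N) < +oo)%E.
Hypothesis x_ppga : forall k,
  prox (fun u => ((alpha k)%:E * (f u - (fine (Fobj f g h (x k)) * g u)%:E))%E)
    (x k - alpha k *: grad h (x k)) (x k.+1).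

Let step k := ppga_step (y := x k) (u := x k.+1) (alpha_gt0 k) (L_lt_alphaV k).

Lemma ppga_dom k : g (x k) != 0 /\ (f (x k) < +oo)%E.
Proof. by elim: k => [|k [gk fk]] //; case: (step k gk fk (x_ppga k)). Qed.

Lemma ppga_decrease k :
  (Fobj f g h (x k.+1) +
     (((alpha k)^-1 - L) / (2 * g (x k.+1)) * norm2 (x k.+1 - x k) ^+ 2)%:E
   <= Fobj f g h (x k))%E.
Proof. by case: (ppga_dom k) => gk fk; case: (step k gk fk (x_ppga k)). Qed.

Lemma ppga_cvg : exists2 C : R, 0 <= C &
  (fun k => fine (Fobj f g h (x k))) @ \oo --> C /\
  (fun k => ((alpha k)^-1 - L) / (2 * g (x k.+1)) * norm2 (x k.+1 - x k) ^+ 2)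
    @ \oo --> 0.
Proof.
apply: cvg_sufficient_decrease => k.
- by case: (ppga_dom k) => gk fk; exact: Fobj_ge0.
- case: (ppga_dom k.+1) => gk fk; have g_pos := g_gt0 gk fk.
  rewrite mulr_ge0 ?sqr_ge0 // divr_ge0 ?mulr_ge0 ?(ltW g_pos) //.
  by rewrite subr_ge0 ltW.
- have := ppga_decrease k.
  case: (ppga_dom k) (ppga_dom k.+1) => gk fk [gk1 fk1].
  by rewrite (FobjE gk fk) (FobjE gk1 fk1) lee_fin.
Qed.

End PPGA.

Theorem mainTheorem9 (R : realType) (n : nat)
  (f : 'rV[R]_n -> \bar R) (g h : 'rV[R]_n -> R) (L : R)
  (alpha : nat -> R) (alo ahi : R) (x : nat -> 'rV[R]_n) :
  let Omega := [set y | g y != 0] in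
  let F := Fobj f g h in
  (* f proper lsc *)
  proper_fun f -> lsc f ->
  (* Assumption 1 *)
  locally_lipschitz_on f (edom f `&` Omega) ->
  locally_lipschitz_diff_on g (Omega `&` edom f) ->
  (forall y, (Omega `&` edom f) y -> 0 < g y) ->
  (forall y, differentiable h y) -> 0 < L ->
  (forall y z, norm2 (grad h y - grad h z) <= L * norm2 (y - z)) ->
  (forall y, edom f y -> (0 <= f y + (h y)%:E)%E) ->
  (Omega `&` edom f) !=set0 ->
  (forall (y : 'rV[R]_n) (gam : R), 0 <= gam ->
     prox (fun u => (f u - (gam * g u)%:E)%E) y !=set0) ->
  lsc F -> level_bounded F ->
  (* PPGA *)
  (Omega `&` edom f) (x 0%N) ->
  0 < alo -> ahi < L^-1 -> (forall k, alo <= alpha k <= ahi) ->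
  (forall k, let C := fine (F (x k)) in
     prox (fun u => ((alpha k)%:E * (f u - (C * g u)%:E))%E)
          (x k - alpha k *: grad h (x k)) (x k.+1)) ->
  (forall k, (F (x k) < +oo)%E) /\
  (forall k, (F (x k.+1) +
      (((alpha k)^-1 - L) / (2 * g (x k.+1)) * norm2 (x k.+1 - x k) ^+ 2)%:E
      <= F (x k))%E) /\
  (exists2 C : R, 0 <= C &
     (fun k => fine (F (x k))) @ \oo --> C /\ (fun k => F (x k)) @ \oo --> C%:E) /\
  ((fun k => ((alpha k)^-1 - L) / g (x k.+1) * norm2 (x k.+1 - x k) ^+ 2)
     @ \oo --> 0).
Proof.
move=> Omega F [f_neq_ninfty _] _ _ _ g_pos h_diff L_gt0 h_lip fh_ge0 _ _ _ _
  x0 alo_gt0 ahi_lt alpha_bnd x_ppga.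
have alpha_gt0 k : 0 < alpha k.
  by case/andP: (alpha_bnd k) => /(lt_le_trans alo_gt0).
have L_lt_alphaV k : L < (alpha k)^-1.
  have : alpha k < L^-1 by case/andP: (alpha_bnd k) => _ /le_lt_trans; apply.
  by rewrite -[in X in _ -> X](invrK L) ltf_pV2 // posrE ?invr_gt0.
have g_gt0 z : g z != 0 -> (f z < +oo)%E -> 0 < g z by move=> *; exact: g_pos.
have x0_dom : g (x 0%N) != 0 /\ (f (x 0%N) < +oo)%E by case: x0.
have dom :=
  ppga_dom f_neq_ninfty h_diff h_lip g_gt0 fh_ge0 alpha_gt0 L_lt_alphaV x0_dom x_ppga.
have FE k : F (x k) = (fine (F (x k)))%:E by case: (dom k) => gk fk; exact: FobjE.
have [C C_ge0 [F_cvg decrease_cvg]] :=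
  ppga_cvg f_neq_ninfty h_diff h_lip g_gt0 fh_ge0 alpha_gt0 L_lt_alphaV x0_dom x_ppga.
split; first by move=> k; rewrite FE ltry.
split; first exact: (ppga_decrease f_neq_ninfty h_diff h_lip g_gt0 fh_ge0 alpha_gt0
  L_lt_alphaV x0_dom x_ppga).
split.
  exists C => //; split => //.
  by apply: cvg_EFin F_cvg; apply: filterE => k; rewrite -/F FE.
have double_eq : (fun k => 2 * (((alpha k)^-1 - L) / (2 * g (x k.+1)) *
    norm2 (x k.+1 - x k) ^+ 2)) =
  (fun k => ((alpha k)^-1 - L) / g (x k.+1) * norm2 (x k.+1 - x k) ^+ 2).
  by apply/funext => k; case: (dom k.+1) => gk _; field; rewrite gk gt_eqF.
by rewrite -double_eq -(mulr0 2); apply: cvgMl_tmp.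
Qed.
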